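(* Let $U_1,U_2$ be unitaries on $n_1\ge1$ and $n_2\ge1$ qubits. Then: (1) for $0<p<2$, $0<q<\infty$: $\|\hat M^{U_1}\otimes\hat M^{U_2}\|_{p,q}\ge\|\hat M^{U_1\otimes U_2}\|_{p,q}$, with equality iff $U_1$ and $U_2$ are both Clifford; (2) for $0<p<2$: $\|\hat M^{U_1}\otimes\hat M^{U_2}\|_{p,\infty}=\|\hat M^{U_1\otimes U_2}\|_{p,\infty}$; (3) for $p>2$, $0<q\le\infty$: $\|\hat M^{U_1}\otimes\hat M^{U_2}\|_{p,q}\le\|\hat M^{U_1\otimes U_2}\|_{p,q}$, and for $0<q<\infty$ equality holds iff $U_1$ and $U_2$ are both Clifford; (4) for $p=2$, $0<q\le\infty$: $\|\hat M^{U_1}\otimes\hat M^{U_2}\|_{2,q}=\|\hat M^{U_1\otimes U_2}\|_{2,q}=1$.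
   Context: Pauli notation $P_{\vec z}=P_{z_1}\otimes\cdots\otimes P_{z_n}$, $P_0=\mathbb I,P_1=X,P_2=Y,P_3=Z$; $\vec0$ the all-zero string. For a unitary $U$ on $n$ qubits, $M^U_{\vec z\vec x}=2^{-n}\mathrm{Tr}(P_{\vec z}UP_{\vec x}U^\dagger)$ and $\hat M^U$ is the $(4^n-1)\times(4^n-1)$ submatrix with rows and columns indexed by strings $\ne\vec0$. $\otimes$ on matrices is the Kronecker product. Group norm: $\|M\|_{p,q}=(\frac1{N_1}\sum_i\|M_i\|_p^q)^{1/q}$ for an $N_1\times N_2$ matrix with rows $M_i$ ($\max_i\|M_i\|_p$ if $q=\infty$). Clifford unitary: $UP_{\vec x}U^\dagger$ is a Pauli operator up to phase for all $\vec x$. *)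

From HB Require Import structures.
From mathcomp Require Import all_boot all_order all_algebra.
From mathcomp Require Import reals exp.
From mathcomp Require Import complex.

Set Implicit Arguments.
Unset Strict Implicit.
Unset Printing Implicit Defensive.

Import Order.TTheory GRing.Theory Num.Theory.
Local Open Scope ring_scope.

Section Quantum.
Variable R : realType.
Local Notation C := (R[i]).

(* computational basis states of n qubits, and Pauli strings (0=I,1=X,2=Y,3=Z) *)
Definition basis (n : nat) := {ffun 'I_n -> 'I_2}.
Definition pstr (n : nat) := {ffun 'I_n -> 'I_4}.
Definition pstr0 (n : nat) : pstr n := [ffun=> ord0].
(* nonzero Pauli strings: index set of the submatrix \hat M *)
Definition nzpstr (n : nat) := {z : pstr n | z != pstr0 n}.

Definition op (n : nat) := basis n -> basis n -> C.

Definition pauli1 (k : 'I_4) (a b : 'I_2) : C :=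
  match val k with
  | 0 => (a == b)%:R
  | 1 => (a != b)%:R
  | 2 => if a == b then 0 else if val a == 0%N then - 'i%C else 'i%C
  | _ => if a == b then (if val a == 0%N then 1 else -1) else 0
  end.

Definition pauli (n : nat) (z : pstr n) : op n :=
  fun a b => \prod_(k < n) pauli1 (z k) (a k) (b k).

Definition mulop (n : nat) (A B : op n) : op n :=
  fun a b => \sum_(c : basis n) A a c * B c b.
Definition adj (n : nat) (A : op n) : op n := fun a b => conjc (A b a).
Definition idop (n : nat) : op n := fun a b => (a == b)%:R.
Definition trace (n : nat) (A : op n) : C := \sum_(a : basis n) A a a.

Definition unitary (n : nat) (U : op n) : Prop :=
  forall a b, mulop U (adj U) a b = @idop n a b.

Definition clifford (n : nat) (U : op n) : Prop :=
  forall x : pstr n, exists (z : pstr n) (c : C),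
    c * conjc c = 1 /\
    forall a b, mulop U (mulop (pauli x) (adj U)) a b = c * pauli z a b.

(* tensor product U1 (x) U2 on n1 + n2 qubits (first n1 qubits for U1) *)
Definition lpart (n1 n2 : nat) (a : basis (n1 + n2)) : basis n1 :=
  [ffun i => a (lshift n2 i)].
Definition rpart (n1 n2 : nat) (a : basis (n1 + n2)) : basis n2 :=
  [ffun j => a (rshift n1 j)].
Definition tensor (n1 n2 : nat) (U1 : op n1) (U2 : op n2) : op (n1 + n2) :=
  fun a b => U1 (@lpart n1 n2 a) (@lpart n1 n2 b) * U2 (@rpart n1 n2 a) (@rpart n1 n2 b).

Definition ptm (n : nat) (U : op n) (z x : pstr n) : C :=
  ((2%:R : C) ^+ n)^-1 * trace (mulop (pauli z) (mulop U (mulop (pauli x) (adj U)))).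

Definition hatM (n : nat) (U : op n) : nzpstr n -> nzpstr n -> C :=
  fun z x => ptm U (val z) (val x).

(* Kronecker product of matrices indexed by finite types (rows/cols as pairs) *)
Definition kron (I1 J1 I2 J2 : finType) (M1 : I1 -> J1 -> C) (M2 : I2 -> J2 -> C)
  : (I1 * I2)%type -> (J1 * J2)%type -> C :=
  fun i j => M1 i.1 j.1 * M2 i.2 j.2.

Definition rownorm (J : finType) (p : R) (r : J -> C) : R :=
  (\sum_(j : J) (Normc.normc (r j)) `^ p) `^ (p^-1).

Definition group_norm (I J : finType) (p q : R) (M : I -> J -> C) : R :=
  ((#|I|%:R)^-1 * \sum_(i : I) (rownorm p (M i)) `^ q) `^ (q^-1).

Definition group_norm_inf (I J : finType) (p : R) (M : I -> J -> C) : R :=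
  \big[Num.max/0]_(i : I) rownorm p (M i).

End Quantum.

(* For a unitary U on n qubits, row z of M^U lists the Pauli coefficients of
   U^dagger P_z U, so by Parseval the rows of M^U are unit vectors, and
   column 0 is the first basis vector.  Hence the l_p mass
   m(z) = sum_x |M_zx|^p of a row is >= 1 for p <= 2 and <= 1 for p >= 2;
   for p <> 2 it equals 1 iff all entries of the row have modulus 0 or 1, and
   a counting argument shows that this holds for every row iff U is Clifford.

   On the full string sets M^{U1 (x) U2} = M^{U1} (x) M^{U2}, so row masses
   are multiplicative.  Dropping the zero strings, with N_i = 4^{n_i} - 1 and
   S_i the sum over the nonzero rows of M^{U_i} of ||row||_p^q,
     ||K||_{p,q}^q = S1 S2 / (N1 N2),
     ||T||_{p,q}^q = ((1 + S1)(1 + S2) - 1) / ((N1 + 1)(N2 + 1) - 1),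
   and an explicit formula for the difference of these averages gives the
   finite-q statements of (1), (3) and (4).  For q = oo, ||K|| is the product
   of the largest row norms of the factors, which T attains on a joint
   nonzero string; for p <= 2 no row norm of T exceeds this product, because
   the zero part of a joint string contributes 1, below every row norm. *)

From HB Require Import structures.
From mathcomp Require Import all_boot all_order all_algebra.
From mathcomp Require Import reals exp.
From mathcomp Require Import complex.
From mathcomp Require Import ring lra.
From Stdlib Require Import FunctionalExtensionality.

Set Implicit Arguments.
Unset Strict Implicit.
Unset Printing Implicit Defensive.

Import Order.TTheory GRing.Theory Num.Theory.
Local Open Scope ring_scope.

Local Notation modc := Normc.normc.

Section PauliAlgebra.
Variable R : realType.
Local Notation C := (R[i]).

Local Ltac complex_ring :=
  apply/eqP; rewrite eq_complex /=; apply/andP; split; apply/eqP; ring.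

Lemma pauli1_adj (k : 'I_4) (a b : 'I_2) : conjc (pauli1 R k a b) = pauli1 R k b a.
Proof.
case: k => [[|[|[|[|k]]]] Hk] //; case: a => [[|[|a]] Ha] //;
case: b => [[|[|b]] Hb] //; rewrite /pauli1 /=; complex_ring.
Qed.

Lemma pauli1_orth (j l : 'I_4) :
  \sum_(a : 'I_2) \sum_(b : 'I_2) pauli1 R j a b * conjc (pauli1 R l a b)
  = 2%:R * (j == l)%:R.
Proof.
rewrite !big_ord_recr !big_ord0 /=.
case: j => [[|[|[|[|j]]]] Hj] //; case: l => [[|[|[|[|l]]]] Hl] //;
rewrite /pauli1 /=; complex_ring.
Qed.

Lemma pauli1_complete (a b c d : 'I_2) :
  \sum_(j : 'I_4) pauli1 R j a b * conjc (pauli1 R j c d)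
  = 2%:R * ((a == c) && (b == d))%:R.
Proof.
rewrite !big_ord_recr !big_ord0 /=.
case: a => [[|[|a]] Ha] //; case: b => [[|[|b]] Hb] //;
case: c => [[|[|c]] Hc] //; case: d => [[|[|d]] Hd] //;
rewrite /pauli1 /=; complex_ring.
Qed.

Lemma sum_delta (T : finType) (a : T) (F : T -> C) :
  \sum_(c : T) (a == c)%:R * F c = F a.
Proof.
rewrite (bigD1 a) //= eqxx mul1r big1 ?addr0 // => c /negbTE.
by rewrite eq_sym => ->; rewrite mul0r.
Qed.

Lemma sum_delta2 (T1 T2 : finType) (a : T1) (b : T2) (F : T1 -> T2 -> C) :
  \sum_(c : T1) \sum_(d : T2) ((a == c) && (b == d))%:R * F c d = F a b.
Proof.
under eq_bigr => c _ do under eq_bigr => d _ do rewrite -mulnb natrM -mulrA.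
under eq_bigr => c _ do rewrite -big_distrr /=.
by rewrite !sum_delta.
Qed.

Section Operators.
Variable n : nat.
Implicit Types A B D : op R n.

Lemma op_ext A B : (forall a b, A a b = B a b) -> A = B.
Proof.
by move=> eAB; do 2!apply: functional_extensionality => ?; apply: eAB.
Qed.

Lemma mulopA A B D : mulop A (mulop B D) = mulop (mulop A B) D.
Proof.
apply: op_ext => a b; rewrite /mulop; under eq_bigr do rewrite big_distrr /=.
rewrite exchange_big; apply: eq_bigr => c _; rewrite big_distrl /=.
by apply: eq_bigr => d _; rewrite mulrA.
Qed.

Lemma trace_mulopC A B : trace (mulop A B) = trace (mulop B A).
Proof.
rewrite /trace /mulop exchange_big; apply: eq_bigr => a _.
by apply: eq_bigr => c _; rewrite mulrC.
Qed.

Lemma mulop1 A : mulop A (@idop R n) = A.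
Proof.
apply: op_ext => a b; rewrite /mulop /idop.
by under eq_bigr do rewrite mulrC eq_sym; rewrite sum_delta.
Qed.

Lemma mul1op A : mulop (@idop R n) A = A.
Proof. by apply: op_ext => a b; rewrite /mulop /idop sum_delta. Qed.

Lemma adjK A : adj (adj A) = A.
Proof. by apply: op_ext => a b; rewrite /adj conjcK. Qed.

Lemma adj_mulop A B : adj (mulop A B) = mulop (adj B) (adj A).
Proof.
apply: op_ext => a b; rewrite /adj /mulop rmorph_sum; apply: eq_bigr => c _.
by rewrite rmorphM mulrC.
Qed.

Lemma unitary_mulop_adj U : unitary U -> mulop U (adj U) = @idop R n.
Proof. by move=> hU; apply: op_ext. Qed.

Lemma sum_ffun_prod (J : finType) (F : 'I_n -> J -> C) :
  \sum_(f : {ffun 'I_n -> J}) \prod_k F k (f k) = \prod_k \sum_(j : J) F k j.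
Proof. by rewrite bigA_distr_bigA. Qed.

Definition hsdot A B : C := trace (mulop A (adj B)).

Lemma prod_delta (J : finType) (f g : {ffun 'I_n -> J}) :
  \prod_k ((f k == g k)%:R : C) = (f == g)%:R.
Proof.
have [->|ne] := eqVneq f g; first by rewrite big1 // => k _; rewrite eqxx.
have [k hk] : exists k, f k != g k.
  apply/existsP; apply: contraR ne => /existsPn H; apply/eqP/ffunP => k.
  by have := H k; rewrite negbK => /eqP.
by rewrite (bigD1 k) //= (negbTE hk) mul0r.
Qed.

Lemma prod_delta2 (J : finType) (f g f' g' : {ffun 'I_n -> J}) :
  \prod_k (((f k == g k) && (f' k == g' k))%:R : C) = ((f == g) && (f' == g'))%:R.
Proof.
rewrite -mulnb natrM -(prod_delta f g) -(prod_delta f' g') -big_split /=.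
by apply: eq_bigr => k _; rewrite -natrM mulnb.
Qed.

Lemma pauli_adj_entry (z : pstr n) a b : conjc (pauli R z a b) = pauli R z b a.
Proof. by rewrite /pauli rmorph_prod; apply: eq_bigr => k _; apply: pauli1_adj. Qed.

Lemma adj_pauli (z : pstr n) : adj (pauli R z) = pauli R z.
Proof. by apply: op_ext => a b; rewrite /adj pauli_adj_entry. Qed.

Lemma pauli0 : pauli R (pstr0 n) = @idop R n.
Proof.
apply: op_ext => a b; rewrite /pauli /idop -prod_delta.
by apply: eq_bigr => k _; rewrite ffunE.
Qed.

Lemma hsdot_pauli (z w : pstr n) :
  hsdot (pauli R z) (pauli R w) = 2%:R ^+ n * (z == w)%:R.
Proof.
rewrite /hsdot /trace /mulop /adj.
under eq_bigr => a _ do under eq_bigr => c _ do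
  rewrite /pauli rmorph_prod -big_split /=.
under eq_bigr => a _ do rewrite (sum_ffun_prod (fun k j =>
  pauli1 R (z k) (a k) j * conjc (pauli1 R (w k) (a k) j))).
rewrite (sum_ffun_prod (fun k i => \sum_(j : 'I_2)
  pauli1 R (z k) i j * conjc (pauli1 R (w k) i j))).
under eq_bigr do rewrite pauli1_orth.
by rewrite big_split /= prod_delta prodr_const card_ord.
Qed.

Lemma pauli_complete (a b c d : basis n) :
  \sum_(x : pstr n) pauli R x a b * conjc (pauli R x c d)
  = 2%:R ^+ n * ((a == c) && (b == d))%:R.
Proof.
under eq_bigr do rewrite /pauli rmorph_prod -big_split /=.
rewrite (sum_ffun_prod (fun k j =>
  pauli1 R j (a k) (b k) * conjc (pauli1 R j (c k) (d k)))).
under eq_bigr do rewrite pauli1_complete.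
by rewrite big_split /= prod_delta2 prodr_const card_ord.
Qed.

Lemma pauli_parseval A B :
  \sum_(x : pstr n) trace (mulop (pauli R x) A) * conjc (trace (mulop (pauli R x) B))
  = 2%:R ^+ n * hsdot A B.
Proof.
have E x : trace (mulop (pauli R x) A) * conjc (trace (mulop (pauli R x) B))
  = \sum_(a : basis n) \sum_(b : basis n) \sum_(c : basis n) \sum_(d : basis n)
      (A b a * conjc (B d c)) * (pauli R x a b * conjc (pauli R x c d)).
  rewrite /trace /mulop big_distrl; apply: eq_bigr => a _.
  rewrite big_distrl; apply: eq_bigr => b _.
  rewrite rmorph_sum big_distrr; apply: eq_bigr => c _.
  rewrite rmorph_sum big_distrr; apply: eq_bigr => d _.
  by rewrite rmorphM /=; ring.
under eq_bigr do rewrite E.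
rewrite exchange_big; under eq_bigr do rewrite exchange_big.
under eq_bigr do under eq_bigr do rewrite exchange_big.
under eq_bigr do under eq_bigr do under eq_bigr do rewrite exchange_big.
under eq_bigr do under eq_bigr do under eq_bigr do under eq_bigr do
  rewrite -big_distrr /= pauli_complete.
rewrite /hsdot /trace /mulop /adj exchange_big big_distrr; apply: eq_bigr => a _.
rewrite big_distrr; apply: eq_bigr => b _ /=.
under eq_bigr do under eq_bigr do rewrite mulrCA mulrC [X in X * _]mulrC -mulrA.
by rewrite (sum_delta2 b a (fun c d => A a b * conjc (B d c) * 2%:R ^+ n)) mulrC.
Qed.

Lemma pauli_expansion A (a b : basis n) :
  \sum_(z : pstr n) trace (mulop (pauli R z) A) * pauli R z a b = 2%:R ^+ n * A a b.
Proof.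
have E z : trace (mulop (pauli R z) A) * pauli R z a b =
   \sum_(d : basis n) \sum_(c : basis n) A c d * (pauli R z a b * conjc (pauli R z c d)).
  rewrite /trace /mulop big_distrl; apply: eq_bigr => d _.
  rewrite big_distrl; apply: eq_bigr => c _.
  by rewrite pauli_adj_entry /=; ring.
under eq_bigr do rewrite E.
rewrite exchange_big; under eq_bigr do rewrite exchange_big.
under eq_bigr do under eq_bigr do rewrite -big_distrr /= pauli_complete.
under eq_bigr do under eq_bigr do rewrite mulrCA mulrC [X in X * _]mulrC -mulrA.
by rewrite exchange_big /= (sum_delta2 a b (fun c d => A c d * 2%:R ^+ n)) mulrC.
Qed.

End Operators.
End PauliAlgebra.

Section Modulus.
Variable R : realType.
Local Notation C := (R[i]).

Lemma mulc_conj (x : C) : x * conjc x = ((modc x ^+ 2)%:C)%C.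
Proof. by rewrite -sqr_normc rmorphXn. Qed.

Lemma modc_ge0 (x : C) : 0 <= modc x.
Proof. by case: x => a b; exact: sqrtr_ge0. Qed.

Lemma modc_eq1 (c : C) : c * conjc c = 1 -> modc c = 1.
Proof.
rewrite mulc_conj => hc.
have /(@complexI R) h : ((modc c ^+ 2)%:C)%C = ((1 : R)%:C)%C by rewrite hc.
by apply/eqP; rewrite -(@sqrp_eq1 _ (modc c)) ?modc_ge0 // h.
Qed.

End Modulus.

Section PTM.
Variables (R : realType) (n : nat) (U : op R n).
Hypothesis hU : unitary U.
Local Notation C := (R[i]).

Lemma two_exp_neq0 : (2%:R : C) ^+ n != 0.
Proof. by rewrite expf_eq0 pnatr_eq0 andbF. Qed.

Lemma ptm_heisenberg z x : ptm U z x =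
  (2%:R ^+ n)^-1 * trace (mulop (pauli R x) (mulop (adj U) (mulop (pauli R z) U))).
Proof. by rewrite /ptm mulopA trace_mulopC -mulopA. Qed.

Lemma hsdot_heisenberg z w :
  hsdot (mulop (adj U) (mulop (pauli R z) U)) (mulop (adj U) (mulop (pauli R w) U))
  = 2%:R ^+ n * (z == w)%:R.
Proof.
rewrite /hsdot !adj_mulop adjK adj_pauli !mulopA trace_mulopC !mulopA.
rewrite (unitary_mulop_adj hU) mul1op -(mulopA (pauli R z) U).
by rewrite (unitary_mulop_adj hU) mulop1 -hsdot_pauli /hsdot adj_pauli.
Qed.

Lemma ptm_rows_orthonormal z w :
  \sum_(x : pstr n) ptm U z x * conjc (ptm U w x) = (z == w)%:R.
Proof.
under eq_bigr do rewrite !ptm_heisenberg rmorphM fmorphV rmorphXn rmorph_nat mulrACA.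
rewrite -big_distrr /= pauli_parseval hsdot_heisenberg.
by rewrite !mulrA divfK ?two_exp_neq0 // mulVf ?two_exp_neq0 // mul1r.
Qed.

Lemma ptm_row_sqnorm z : \sum_(x : pstr n) modc (ptm U z x) ^+ 2 = 1.
Proof.
apply: (@complexI R); rewrite raddf_sum /=.
by under eq_bigr do rewrite -mulc_conj; rewrite ptm_rows_orthonormal eqxx.
Qed.

(* Column 0 of M^U is the first basis vector: U I U^dagger = I. *)
Lemma ptm_col0 z : ptm U z (pstr0 n) = (z == pstr0 n)%:R.
Proof.
rewrite /ptm pauli0 mul1op (unitary_mulop_adj hU).
have -> : @idop R n = adj (pauli R (pstr0 n)) by rewrite adj_pauli pauli0.
by rewrite -/(hsdot _ _) hsdot_pauli mulrA mulVf ?two_exp_neq0 // mul1r.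
Qed.

Lemma ptm_row_unit_entry z x : modc (ptm U z x) = 1 ->
  forall y, y != x -> ptm U z y = 0.
Proof.
move=> h1 y ny; apply: (@Normc.eq0_normc R).
have := ptm_row_sqnorm z; rewrite (bigD1 x) //= h1 expr1n.
move=> /(congr1 (fun t => t - 1)) /=; rewrite addrC addrK subrr => /psumr_eq0P H.
by have /eqP := H (fun i _ => sqr_ge0 _) y ny; rewrite sqrf_eq0 => /eqP.
Qed.

Lemma ptm_col_unit_unique x z w :
  modc (ptm U z x) = 1 -> modc (ptm U w x) = 1 -> z = w.
Proof.
move=> hz hw; apply/eqP; apply/negPn/negP => nzw.
have := ptm_rows_orthonormal z w; rewrite (negbTE nzw) (bigD1 x) //= big1 ?addr0.
  move/eqP; rewrite mulf_eq0 conjc_eq0 => /orP [] /eqP h.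
  - by move: hz; rewrite h Normc.normc0 => /eqP; rewrite eq_sym oner_eq0.
  - by move: hw; rewrite h Normc.normc0 => /eqP; rewrite eq_sym oner_eq0.
by move=> y ny; rewrite (ptm_row_unit_entry hz ny) mul0r.
Qed.

Definition ptm01 := forall z x, modc (ptm U z x) = 0 \/ modc (ptm U z x) = 1.

(* If U P_x U^dagger = c P_w with |c| = 1, column x of M^U is c times the
   basis vector at w. *)
Lemma clifford_ptm01 : clifford U -> ptm01.
Proof.
move=> hc z x; have [w [c [hcc hX]]] := hc x.
have -> : ptm U z x = c * (z == w)%:R.
  rewrite /ptm; have -> : mulop U (mulop (pauli R x) (adj U)) = fun a b => c * pauli R w a b.
    exact: op_ext.
  have -> : trace (mulop (pauli R z) (fun a b => c * pauli R w a b)) =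
            c * hsdot (pauli R z) (pauli R w).
    rewrite /hsdot /trace /mulop big_distrr; apply: eq_bigr => a _.
    rewrite big_distrr; apply: eq_bigr => b _ /=.
    by rewrite /adj pauli_adj_entry mulrCA.
  by rewrite hsdot_pauli mulrCA mulKf ?two_exp_neq0.
rewrite Normc.normcM; case: eqP => _; last by left; rewrite Normc.normc0 mulr0.
by right; rewrite Normc.normc1 mulr1 modc_eq1.
Qed.

(* Counting argument: if all entries have modulus 0 or 1, every column
   contains an entry of modulus 1.  Indeed each of the #rows rows contains
   exactly one such entry, and no column contains two of them. *)
Lemma ptm01_col_unit : ptm01 -> forall x, exists w, modc (ptm U w x) = 1.
Proof.
move=> H01 x.
pose t z y := modc (ptm U z y) ^+ 2.
have t01 z y : t z y = (modc (ptm U z y) == 1)%:R.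
  by rewrite /t; case: (H01 z y) => ->; rewrite ?expr1n ?eqxx // expr2 mulr0 eq_sym oner_eq0.
have col_le1 y : \sum_z t z y <= 1.
  case: (pickP (fun z => modc (ptm U z y) == 1)) => [z0 /eqP h0|hn].
    rewrite (bigD1 z0) //= t01 h0 eqxx big1 ?addr0 // => z nz.
    by rewrite t01; case: eqP => // /(ptm_col_unit_unique h0) ez; rewrite ez eqxx in nz.
  by rewrite big1 // => z _; rewrite t01 hn.
have col_eq1 : \sum_z t z x = 1.
  have total : \sum_y (1 - \sum_z t z y) = 0.
    rewrite sumrB exchange_big /=; under [X in _ - X]eq_bigr do rewrite ptm_row_sqnorm.
    by rewrite subrr.
  have ge0 y : true -> 0 <= 1 - \sum_z t z y by rewrite subr_ge0 col_le1.
  have := psumr_eq0P ge0 total (i := x) isT.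
  by move/eqP; rewrite subr_eq0 => /eqP <-.
case: (pickP (fun z => modc (ptm U z x) == 1)) => [w /eqP hw|hn]; first by exists w.
by move: col_eq1; rewrite big1 => [/eqP|z _]; rewrite ?(eq_sym 0) ?oner_eq0 // t01 hn.
Qed.

(* Conversely, 0/1 moduli make each U P_x U^dagger a phase times one Pauli
   string, by the Pauli expansion of that operator. *)
Lemma ptm01_clifford : ptm01 -> clifford U.
Proof.
move=> H01 x; have [w hw] := ptm01_col_unit H01 x.
exists w, (ptm U w x); split; first by rewrite mulc_conj hw expr1n.
move=> a b; set X := mulop U (mulop (pauli R x) (adj U)).
have -> : X a b = \sum_z ptm U z x * pauli R z a b.
  rewrite /ptm; under eq_bigr do rewrite -mulrA.
  by rewrite -big_distrr /= pauli_expansion mulKf ?two_exp_neq0.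
rewrite (bigD1 w) //= big1 ?addr0 // => z nz.
case: (H01 z x) => h; first by rewrite (Normc.eq0_normc h) mul0r.
by rewrite (ptm_col_unit_unique h hw) eqxx in nz.
Qed.

Lemma cliffordP : clifford U <-> ptm01.
Proof. by split; [apply: clifford_ptm01 | apply: ptm01_clifford]. Qed.

End PTM.

Section Splitting.
Variables n1 n2 : nat.

Definition lpf (T : finType) (f : {ffun 'I_(n1 + n2) -> T}) : {ffun 'I_n1 -> T} :=
  [ffun i => f (lshift n2 i)].
Definition rpf (T : finType) (f : {ffun 'I_(n1 + n2) -> T}) : {ffun 'I_n2 -> T} :=
  [ffun j => f (rshift n1 j)].
Definition joinf (T : finType) (f1 : {ffun 'I_n1 -> T}) (f2 : {ffun 'I_n2 -> T})
  : {ffun 'I_(n1 + n2) -> T} :=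
  [ffun i => match split i with inl j => f1 j | inr k => f2 k end].

Lemma lpf_join T f1 f2 : lpf (@joinf T f1 f2) = f1.
Proof. by apply/ffunP => i; rewrite !ffunE (@unsplitK n1 n2 (inl i)). Qed.

Lemma rpf_join T f1 f2 : rpf (@joinf T f1 f2) = f2.
Proof. by apply/ffunP => i; rewrite !ffunE (@unsplitK n1 n2 (inr i)). Qed.

Lemma join_lr (T : finType) (f : {ffun 'I_(n1 + n2) -> T}) : joinf (lpf f) (rpf f) = f.
Proof.
apply/ffunP => i; rewrite ffunE; case: splitP => [j e|k e]; rewrite ffunE;
  by congr (f _); apply: val_inj.
Qed.

Lemma eq_lrpf (T : finType) (f g : {ffun 'I_(n1 + n2) -> T}) :
  (lpf f == lpf g) && (rpf f == rpf g) = (f == g).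
Proof.
apply/andP/eqP => [[/eqP e1 /eqP e2]|-> //].
by rewrite -(join_lr f) -(join_lr g) e1 e2.
Qed.

Lemma sum_join (T : finType) (V : nmodType) (F : {ffun 'I_(n1 + n2) -> T} -> V) :
  \sum_f F f = \sum_(f1 : {ffun 'I_n1 -> T}) \sum_(f2 : {ffun 'I_n2 -> T}) F (joinf f1 f2).
Proof.
rewrite pair_big /= (reindex (fun f => joinf f.1 f.2)) //.
exists (fun f => (lpf f, rpf f)) => [[f1 f2] _|f _] /=.
  by rewrite lpf_join rpf_join.
by rewrite join_lr.
Qed.

Lemma lpf0 : lpf (pstr0 (n1 + n2)) = pstr0 n1.
Proof. by apply/ffunP => i; rewrite !ffunE. Qed.

Lemma joinf_neq0 (z1 : pstr n1) (z2 : pstr n2) :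
  z1 != pstr0 n1 -> joinf z1 z2 != pstr0 (n1 + n2).
Proof. by apply: contraNneq => e; rewrite -(lpf_join z1 z2) e lpf0. Qed.

Lemma lpart_join (a1 : basis n1) (a2 : basis n2) : lpart (joinf a1 a2) = a1.
Proof. exact: lpf_join. Qed.

Lemma rpart_join (a1 : basis n1) (a2 : basis n2) : rpart (joinf a1 a2) = a2.
Proof. exact: rpf_join. Qed.

Variable R : realType.

Lemma mulop_tensor (A1 B1 : op R n1) (A2 B2 : op R n2) :
  mulop (tensor A1 A2) (tensor B1 B2) = tensor (mulop A1 B1) (mulop A2 B2).
Proof.
apply: op_ext => a b; rewrite /mulop /tensor sum_join big_distrl.
apply: eq_bigr => c1 _; rewrite big_distrr; apply: eq_bigr => c2 _ /=.
by rewrite lpart_join rpart_join mulrACA.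
Qed.

Lemma adj_tensor (A1 : op R n1) (A2 : op R n2) :
  adj (tensor A1 A2) = tensor (adj A1) (adj A2).
Proof. by apply: op_ext => a b; rewrite /adj /tensor rmorphM. Qed.

Lemma trace_tensor (A1 : op R n1) (A2 : op R n2) :
  trace (tensor A1 A2) = trace A1 * trace A2.
Proof.
rewrite /trace /tensor sum_join big_distrl; apply: eq_bigr => c1 _.
rewrite big_distrr; apply: eq_bigr => c2 _ /=.
by rewrite lpart_join rpart_join.
Qed.

Lemma pauli_join (z1 : pstr n1) (z2 : pstr n2) :
  pauli R (joinf z1 z2) = tensor (pauli R z1) (pauli R z2).
Proof.
apply: op_ext => a b; rewrite /pauli /tensor big_split_ord /=.
by congr (_ * _); apply: eq_bigr => i _;
  rewrite !ffunE ?(@unsplitK n1 n2 (inl i)) ?(@unsplitK n1 n2 (inr i)).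
Qed.

Lemma ptm_tensor (U1 : op R n1) (U2 : op R n2) z1 z2 x1 x2 :
  ptm (tensor U1 U2) (joinf z1 z2) (joinf x1 x2) = ptm U1 z1 x1 * ptm U2 z2 x2.
Proof.
rewrite /ptm !pauli_join adj_tensor !mulop_tensor trace_tensor exprD invfM.
by rewrite mulrACA.
Qed.

Lemma unitary_tensor (U1 : op R n1) (U2 : op R n2) :
  unitary U1 -> unitary U2 -> unitary (tensor U1 U2).
Proof.
move=> hU1 hU2 a b.
rewrite adj_tensor mulop_tensor !unitary_mulop_adj // /tensor /idop -natrM mulnb.
by rewrite -(eq_lrpf a b).
Qed.

End Splitting.

Section RealFacts.
Variable R : realType.

Lemma sumr_eq0_signed (I : finType) (F : I -> R) :
  (forall i, 0 <= F i) \/ (forall i, F i <= 0) ->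
  \sum_i F i = 0 <-> forall i, F i = 0.
Proof.
move=> hF; split; last by move=> h0; rewrite big1.
case: hF => hF s0 i.
  exact: (psumr_eq0P (fun i _ => hF i) s0 (i := i) isT).
have hN j : true -> 0 <= - F j by rewrite oppr_ge0.
have sN : \sum_j - F j = 0 by rewrite sumrN s0 oppr0.
by apply/eqP; rewrite -oppr_eq0 (psumr_eq0P hN sN (i := i) isT).
Qed.

Lemma sumr_eq_card (I : finType) (F : I -> R) :
  (forall i, 1 <= F i) \/ (forall i, F i <= 1) ->
  \sum_i F i = #|I|%:R <-> forall i, F i = 1.
Proof.
move=> hF; have signed : (forall i, 0 <= F i - 1) \/ (forall i, F i - 1 <= 0).
  by case: hF => hF; [left|right] => i; rewrite ?subr_ge0 ?subr_le0.
split=> [e i|h]; last by under eq_bigr do rewrite h; rewrite sumr_const.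
have e0 : \sum_i (F i - 1) = 0 by rewrite sumrB sumr_const e subrr.
by apply/eqP; rewrite -subr_eq0 ((sumr_eq0_signed signed).1 e0 i).
Qed.

Lemma powR_ge1 (x e : R) : 0 <= e -> 1 <= x -> 1 <= x `^ e.
Proof.
move=> e0 x1; have one_pow : (1 : R) `^ e = 1 by rewrite powR1.
rewrite -[leLHS]one_pow.
by apply: ge0_ler_powR; rewrite ?nnegrE // (le_trans _ x1).
Qed.

Lemma powR_le1 (x e : R) : 0 <= e -> 0 <= x -> x <= 1 -> x `^ e <= 1.
Proof.
move=> e0 x0 x1; have one_pow : (1 : R) `^ e = 1 by rewrite powR1.
rewrite -[leRHS]one_pow.
by apply: ge0_ler_powR; rewrite ?nnegrE.
Qed.

Lemma powR_eq1P (x e : R) : 0 < e -> 0 <= x -> x `^ e = 1 <-> x = 1.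
Proof.
move=> e0 x0; split=> [/eqP|->]; last by rewrite powR1.
by rewrite powR_eq1 (gt_eqF e0) orbF ltNge x0 orbF => /eqP.
Qed.

Lemma bigmax_attained (I : finType) (i0 : I) (f : I -> R) :
  (forall i, 0 <= f i) -> exists i, \big[Num.max/0]_i f i = f i.
Proof.
move=> f_ge0; have [i _ e] := @eq_bigmax _ _ _ 0 i0 xpredT f isT (fun i _ => f_ge0 i).
by exists i.
Qed.

Lemma bigmax_mul (I J : finType) (i0 : I) (j0 : J) (f : I -> R) (g : J -> R) :
  (forall i, 0 <= f i) -> (forall j, 0 <= g j) ->
  \big[Num.max/0]_(ij : I * J) (f ij.1 * g ij.2)
  = (\big[Num.max/0]_i f i) * (\big[Num.max/0]_j g j).
Proof.
move=> f_ge0 g_ge0; apply/le_anti/andP; split.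
  apply: bigmax_le => [|[i j] _ /=]; first by rewrite mulr_ge0 ?bigmax_ge_id.
  by rewrite ler_pM ?le_bigmax.
have [i ->] := bigmax_attained i0 f_ge0; have [j ->] := bigmax_attained j0 g_ge0.
exact: (le_bigmax 0 (fun ij : I * J => f ij.1 * g ij.2) (i, j)).
Qed.

Lemma powR_lt_decr (r p s : R) : 0 < r < 1 -> p < s -> r `^ s < r `^ p.
Proof.
move=> /andP [r0 r1] ps; rewrite /powR gt_eqF // ltr_expR ltr_nM2r //.
by apply: ln_lt0; rewrite r0 r1.
Qed.

Section UnitInterval.
Variables r p : R.
Hypotheses (r_ge0 : 0 <= r) (r_le1 : r <= 1) (p_gt0 : 0 < p).

Lemma sqr_powR : r ^+ 2 = r `^ 2.
Proof. by rewrite -powR_mulrn. Qed.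

Lemma sqr_le_powR : p <= 2 -> r ^+ 2 <= r `^ p.
Proof.
move=> hp; have [->|r0] := eqVneq r 0; first by rewrite expr2 mulr0 powR_ge0.
have [->|r1] := eqVneq r 1; first by rewrite powR1 expr1n.
rewrite sqr_powR; have [->|hp2] := eqVneq p 2; first by [].
apply/ltW/powR_lt_decr; first by rewrite !lt_neqAle eq_sym r0 r1 r_ge0 r_le1.
by rewrite lt_neqAle hp2.
Qed.

Lemma powR_le_sqr : 2 <= p -> r `^ p <= r ^+ 2.
Proof.
move=> hp; have [->|r0] := eqVneq r 0; first by rewrite expr2 mulr0 powR0 ?gt_eqF.
have [->|r1] := eqVneq r 1; first by rewrite powR1 expr1n.
rewrite sqr_powR; have [->|hp2] := eqVneq p 2; first by [].
apply/ltW/powR_lt_decr; first by rewrite !lt_neqAle eq_sym r0 r1 r_ge0 r_le1.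
by rewrite lt_neqAle eq_sym hp2.
Qed.

Lemma powR_eq_sqrP : p != 2 -> r `^ p = r ^+ 2 <-> r = 0 \/ r = 1.
Proof.
move=> hp2; split; last by case=> ->; rewrite ?expr1n ?powR1 // expr2 mulr0 powR0 ?gt_eqF.
have [->|r0] := eqVneq r 0; first by left.
have [->|r1] := eqVneq r 1; first by right.
have rr : 0 < r < 1 by rewrite !lt_neqAle eq_sym r0 r1 r_ge0 r_le1.
rewrite sqr_powR; case: (ltgtP p 2) hp2 => // hp _;
  by have := powR_lt_decr rr hp => /[swap] ->; rewrite ltxx.
Qed.

End UnitInterval.

Section UnitVector.
Variables (J : finType) (r : J -> R) (p : R).
Hypotheses (r_ge0 : forall j, 0 <= r j) (r_unit : \sum_j r j ^+ 2 = 1).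
Hypothesis p_gt0 : 0 < p.

Lemma unit_coord_le1 j : r j <= 1.
Proof.
rewrite -(expr_le1 (n := 2)) // -r_unit (bigD1 j) //= lerDl.
by apply: sumr_ge0 => i _; apply: sqr_ge0.
Qed.

(* The l_p-mass of a unit vector, compared with 1 through the termwise
   comparison of r_j ^ p with r_j ^ 2. *)
Lemma powsum_sub1 : \sum_j r j `^ p - 1 = \sum_j (r j `^ p - r j ^+ 2).
Proof. by rewrite sumrB r_unit. Qed.

Lemma powsum_ge1 : p <= 2 -> 1 <= \sum_j r j `^ p.
Proof.
move=> hp; rewrite -subr_ge0 powsum_sub1; apply: sumr_ge0 => j _.
by rewrite subr_ge0 sqr_le_powR ?unit_coord_le1.
Qed.

Lemma powsum_le1 : 2 <= p -> \sum_j r j `^ p <= 1.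
Proof.
move=> hp; rewrite -subr_le0 powsum_sub1; apply: sumr_le0 => j _.
by rewrite subr_le0 powR_le_sqr ?unit_coord_le1.
Qed.

Lemma powsum_gt0 : 0 < \sum_j r j `^ p.
Proof.
rewrite lt_def sumr_ge0 ?andbT => [|j _]; last exact: powR_ge0.
apply/negP => /eqP /psumr_eq0P h0; move: r_unit; rewrite big1 => [/eqP|j _].
  by rewrite eq_sym oner_eq0.
by rewrite (powR_eq0_eq0 (h0 (fun j _ => powR_ge0 _ _) j isT)) expr2 mulr0.
Qed.

Lemma powsum_eq1P : p != 2 -> \sum_j r j `^ p = 1 <-> forall j, r j = 0 \/ r j = 1.
Proof.
move=> hp2; have eqP2 := powR_eq_sqrP (r_ge0 _) (unit_coord_le1 _) p_gt0 hp2.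
have signed : (forall j, 0 <= r j `^ p - r j ^+ 2) \/ (forall j, r j `^ p - r j ^+ 2 <= 0).
  case: (ltgtP p 2) hp2 => // hp _; [left|right] => j.
    by rewrite subr_ge0 sqr_le_powR ?unit_coord_le1 ?(ltW hp).
  by rewrite subr_le0 powR_le_sqr ?unit_coord_le1 ?(ltW hp).
split=> [e j|h].
  have e0 : \sum_j (r j `^ p - r j ^+ 2) = 0 by rewrite -powsum_sub1 e subrr.
  by apply/eqP2/eqP; rewrite -subr_eq0 ((sumr_eq0_signed signed).1 e0 j).
apply/eqP; rewrite -subr_eq0 powsum_sub1; apply/eqP/(sumr_eq0_signed signed) => j.
by rewrite (eqP2 j).2 ?subrr.
Qed.

End UnitVector.
End RealFacts.

Section Averages.
Variable R : realType.

(* With N_i = 4^{n_i} - 1 nonzero strings and S_i the sum of the q-th powers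
   of the row norms of M^{U_i} over them, ||K||^q and ||T||^q are the
   following two averages (T also sees the rows of M^{U_1 (x) U_2} having one
   zero part, whose norms are those of a single factor). *)
Definition prod_avg (N1 N2 S1 S2 : R) := (N1 * N2)^-1 * (S1 * S2).
Definition tensor_avg (N1 N2 S1 S2 : R) :=
  ((N1 + 1) * (N2 + 1) - 1)^-1 * ((1 + S1) * (1 + S2) - 1).

Variables N1 N2 S1 S2 : R.
Hypotheses (N1_gt0 : 0 < N1) (N2_gt0 : 0 < N2).

Let D_gt0 : 0 < (N1 + 1) * (N2 + 1) - 1.
Proof.
have -> : (N1 + 1) * (N2 + 1) - 1 = N1 * N2 + N1 + N2 by ring.
by rewrite !addr_gt0 // mulr_gt0.
Qed.

Lemma prod_avg_ge0 : 0 <= S1 -> 0 <= S2 -> 0 <= prod_avg N1 N2 S1 S2.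
Proof. by move=> s1 s2; rewrite /prod_avg !mulr_ge0 // invr_ge0 mulr_ge0 // ltW. Qed.

Lemma tensor_avg_ge0 : 0 <= S1 -> 0 <= S2 -> 0 <= tensor_avg N1 N2 S1 S2.
Proof.
move=> s1 s2; rewrite /tensor_avg mulr_ge0 ?invr_ge0 ?(ltW D_gt0) //.
have -> : (1 + S1) * (1 + S2) - 1 = S1 * S2 + S1 + S2 by ring.
by rewrite !addr_ge0 // mulr_ge0.
Qed.

Lemma prod_avg_full : prod_avg N1 N2 N1 N2 = 1.
Proof. by rewrite /prod_avg mulVf // mulf_neq0 ?gt_eqF. Qed.

Lemma tensor_avg_full : tensor_avg N1 N2 N1 N2 = 1.
Proof. by rewrite /tensor_avg [1 + N1]addrC [1 + N2]addrC mulVf ?gt_eqF. Qed.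

Lemma avg_gap : prod_avg N1 N2 S1 S2 - tensor_avg N1 N2 S1 S2 =
  (N1 * S1 * (S2 - N2) + N2 * S2 * (S1 - N1)) / (N1 * N2 * ((N1 + 1) * (N2 + 1) - 1)).
Proof. by rewrite /prod_avg /tensor_avg; field; rewrite !lt0r_neq0. Qed.

Let denom_gt0 : 0 < N1 * N2 * ((N1 + 1) * (N2 + 1) - 1).
Proof. by rewrite !mulr_gt0. Qed.

Lemma tensor_le_prod_avg : N1 <= S1 -> N2 <= S2 ->
  tensor_avg N1 N2 S1 S2 <= prod_avg N1 N2 S1 S2.
Proof.
move=> h1 h2; rewrite -subr_ge0 avg_gap divr_ge0 ?(ltW denom_gt0) //.
have s1 : 0 <= S1 := le_trans (ltW N1_gt0) h1.
have s2 : 0 <= S2 := le_trans (ltW N2_gt0) h2.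
by rewrite addr_ge0 // !mulr_ge0 ?subr_ge0 // ltW.
Qed.

Lemma prod_le_tensor_avg : 0 <= S1 <= N1 -> 0 <= S2 <= N2 ->
  prod_avg N1 N2 S1 S2 <= tensor_avg N1 N2 S1 S2.
Proof.
move=> /andP [s1 h1] /andP [s2 h2]; rewrite -subr_le0 avg_gap.
rewrite pmulr_lle0 ?invr_gt0 //.
have t1 : 0 <= N1 * S1 * (N2 - S2) by rewrite !mulr_ge0 ?subr_ge0 // ltW.
have t2 : 0 <= N2 * S2 * (N1 - S1) by rewrite !mulr_ge0 ?subr_ge0 // ltW.
lra.
Qed.

Lemma avg_eqP : (N1 <= S1 /\ N2 <= S2) \/ (0 < S1 <= N1 /\ 0 < S2 <= N2) ->
  prod_avg N1 N2 S1 S2 = tensor_avg N1 N2 S1 S2 <-> S1 = N1 /\ S2 = N2.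
Proof.
move=> regime; split; last first.
  case=> e1 e2; apply/eqP; rewrite -subr_eq0 avg_gap {2}e1 {1}e2.
  by rewrite !subrr !mulr0 addr0 mul0r.
move=> /eqP; rewrite -subr_eq0 avg_gap mulf_eq0 invr_eq0 (gt_eqF denom_gt0) orbF.
move=> /eqP gap0.
have [s1 s2] : 0 < S1 /\ 0 < S2.
  case: regime => [[h1 h2]|[/andP[h1 _] /andP[h2 _]]] //.
  by rewrite (lt_le_trans N1_gt0 h1) (lt_le_trans N2_gt0 h2).
have [t1 t2] : N1 * S1 * (S2 - N2) = 0 /\ N2 * S2 * (S1 - N1) = 0.
  have p1 : 0 < N1 * S1 by rewrite mulr_gt0.
  have p2 : 0 < N2 * S2 by rewrite mulr_gt0.
  case: regime => [[h1 h2]|[/andP[_ h1] /andP[_ h2]]]; split; nra.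
have p1 : N1 * S1 != 0 by rewrite mulf_neq0 ?gt_eqF.
have p2 : N2 * S2 != 0 by rewrite mulf_neq0 ?gt_eqF.
move: t1 t2 => /eqP; rewrite mulf_eq0 (negbTE p1) subr_eq0 => /eqP e2.
by move=> /eqP; rewrite mulf_eq0 (negbTE p2) subr_eq0 => /eqP e1.
Qed.

End Averages.

Lemma sum_pstr0 (V : nmodType) (n : nat) (F : pstr n -> V) :
  \sum_(x : pstr n) F x = F (pstr0 n) + \sum_(x : nzpstr n) F (val x).
Proof.
by rewrite (bigD1 (pstr0 n)) //= (@big_sub _ 0 +%R _ [pred x | x != pstr0 n] F).
Qed.

Lemma card_nzpstr n : (#|{: nzpstr n}| + 1 = 4 ^ n)%N.
Proof. by rewrite card_sig cardC1 card_ffun !card_ord addn1 prednK // expn_gt0. Qed.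

Lemma card_nzpstr_gt0 (R : realType) n : (1 <= n)%N -> (0 : R) < #|{: nzpstr n}|%:R.
Proof.
move=> hn; rewrite ltr0n lt0n; apply/eqP => h0; have := card_nzpstr n.
rewrite h0 add0n => e; have : (4 ^ 1 <= 4 ^ n)%N by rewrite leq_pexp2l.
by rewrite -e.
Qed.

(* On at least one qubit there is a nonzero string, e.g. Z (x) ... (x) Z. *)
Lemma nzpstr_witness_proof n : (0 < n)%N -> [ffun=> (ord_max : 'I_4)] != pstr0 n.
Proof. by move=> hn; apply/eqP => /ffunP /(_ (Ordinal hn)); rewrite !ffunE. Qed.

Definition nzpstr_witness n (hn : (0 < n)%N) : nzpstr n :=
  exist (fun z : pstr n => z != pstr0 n) _ (nzpstr_witness_proof hn).

Lemma rownorm_ge0 (R : realType) (J : finType) (p : R) (r : J -> R[i]) :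
  0 <= rownorm p r.
Proof. exact: powR_ge0. Qed.

Lemma rownorm_kron (R : realType) (I1 J1 I2 J2 : finType) (M1 : I1 -> J1 -> R[i])
    (M2 : I2 -> J2 -> R[i]) (p : R) (i : I1 * I2) :
  rownorm p (kron M1 M2 i) = rownorm p (M1 i.1) * rownorm p (M2 i.2).
Proof.
rewrite /rownorm /kron -powRM ?sumr_ge0 // => [|j _|j _]; try exact: powR_ge0.
rewrite big_distrlr pair_bigA /=; congr (_ `^ _); apply: eq_bigr => j _.
by rewrite Normc.normcM powRM ?modc_ge0.
Qed.

Section RowMass.
Variables (R : realType) (n : nat) (U : op R n).
Hypothesis hU : unitary U.
Variable p : R.
Hypothesis p_gt0 : 0 < p.

Definition rowmass (z : pstr n) : R := \sum_(x : pstr n) modc (ptm U z x) `^ p.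

Lemma rowmass0 : rowmass (pstr0 n) = 1.
Proof.
have e00 : ptm U (pstr0 n) (pstr0 n) = 1 by rewrite (ptm_col0 hU) eqxx.
rewrite /rowmass (bigD1 (pstr0 n)) //= e00 Normc.normc1 powR1 big1 ?addr0 // => x nx.
by rewrite (ptm_row_unit_entry hU _ nx) ?e00 ?Normc.normc1 // Normc.normc0 powR0 ?gt_eqF.
Qed.

(* The l_p norm of a row of \hat M^U is that of the full row: the entry in
   column 0 of a nonzero row vanishes. *)
Lemma sum_hatM_row (z : nzpstr n) :
  \sum_(x : nzpstr n) modc (hatM U z x) `^ p = rowmass (val z).
Proof.
rewrite /rowmass sum_pstr0 (ptm_col0 hU).
by case: z => z nz /=; rewrite (negbTE nz) Normc.normc0 powR0 ?gt_eqF // add0r.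
Qed.

Lemma rownorm_hatM (z : nzpstr n) : rownorm p (hatM U z) = rowmass (val z) `^ p^-1.
Proof. by rewrite /rownorm sum_hatM_row. Qed.

(* Each row of M^U is a unit vector, so its l_p mass is compared with 1
   according to the side of 2 on which p lies. *)
Lemma rowmass_ge1 z : p <= 2 -> 1 <= rowmass z.
Proof. exact: (powsum_ge1 (fun x => modc_ge0 _) (ptm_row_sqnorm hU z)). Qed.

Lemma rowmass_le1 z : 2 <= p -> rowmass z <= 1.
Proof. exact: (powsum_le1 (fun x => modc_ge0 _) (ptm_row_sqnorm hU z)). Qed.

Lemma rowmass_gt0 z : 0 < rowmass z.
Proof. exact: (powsum_gt0 p (ptm_row_sqnorm hU z)). Qed.

Lemma rowmass_ge0 z : 0 <= rowmass z.
Proof. exact/ltW/rowmass_gt0. Qed.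

Lemma clifford_rowmassP : p != 2 ->
  clifford U <-> forall z : nzpstr n, rowmass (val z) = 1.
Proof.
move=> p2; have massP z := powsum_eq1P (fun x => modc_ge0 _) (ptm_row_sqnorm hU z) p_gt0 p2.
rewrite (cliffordP hU); split=> [H01 z|H1 z x]; first exact/(massP (val z)).2/H01.
apply: (massP z).1; have [->|nz] := eqVneq z (pstr0 n); first exact: rowmass0.
exact: (H1 (exist _ z nz)).
Qed.

(* For p <= 2 the largest row norm of \hat M^U bounds every row of M^U,
   including row 0 of norm 1, since then all row norms are >= 1. *)
Lemma rowmass_root_le_inf (hn : (1 <= n)%N) z : p <= 2 ->
  rowmass z `^ p^-1 <= group_norm_inf p (hatM U).
Proof.
move=> hp; have p_inv_ge0 : 0 <= p^-1 by rewrite invr_ge0 ltW.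
have [->|nz] := eqVneq z (pstr0 n); last first.
  have := le_bigmax 0 (fun z => rownorm p (hatM U z))
    (exist (fun z : pstr n => z != pstr0 n) z nz).
  by rewrite rownorm_hatM.
rewrite rowmass0 powR1; apply: le_trans (le_bigmax 0 _ (nzpstr_witness hn)).
by rewrite rownorm_hatM powR_ge1 ?rowmass_ge1.
Qed.

Lemma group_norm_inf_p2 (hn : (1 <= n)%N) : p = 2 -> group_norm_inf p (hatM U) = 1.
Proof.
move=> p2; rewrite /group_norm_inf.
have [z ->] := bigmax_attained (nzpstr_witness hn) (fun z => rownorm_ge0 p (hatM U z)).
rewrite rownorm_hatM; suff -> : rowmass (val z) = 1 by rewrite powR1.
by apply/le_anti; rewrite rowmass_le1 ?rowmass_ge1 ?p2.
Qed.

End RowMass.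

Section MassSum.
Variables (R : realType) (n : nat) (U : op R n).
Hypothesis hU : unitary U.
Variables p q : R.
Hypotheses (p_gt0 : 0 < p) (q_gt0 : 0 < q).

Definition rowpow (z : pstr n) : R := (rowmass U p z `^ p^-1) `^ q.
Definition masssum : R := \sum_(z : nzpstr n) rowpow (val z).

Local Notation N := (#|{: nzpstr n}|%:R : R).

Let pq_gt0 : 0 < p^-1 * q.
Proof. by rewrite mulr_gt0 ?invr_gt0. Qed.

(* Every summand lies on the same side of 1 as the row masses, and the zero
   row contributes exactly 1. *)
Lemma rowpowE z : rowpow z = rowmass U p z `^ (p^-1 * q).
Proof. by rewrite /rowpow powRrM. Qed.

Lemma rowpow0 : rowpow (pstr0 n) = 1.
Proof. by rewrite rowpowE rowmass0 // powR1. Qed.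

Lemma masssum_ge0 : 0 <= masssum.
Proof. by apply: sumr_ge0 => z _; exact: powR_ge0. Qed.

Lemma masssum_gt0 : (1 <= n)%N -> 0 < masssum.
Proof.
move=> hn; rewrite /masssum (bigD1 (nzpstr_witness hn)) //= ltr_pwDl //.
  by rewrite rowpowE powR_gt0 ?rowmass_gt0.
by apply: sumr_ge0 => z _; exact: powR_ge0.
Qed.

Lemma masssum_ge : p <= 2 -> N <= masssum.
Proof.
move=> hp; rewrite -sumr_const; apply: ler_sum => z _.
by rewrite rowpowE powR_ge1 ?rowmass_ge1 // ltW.
Qed.

Lemma masssum_le : 2 <= p -> masssum <= N.
Proof.
move=> hp; rewrite -sumr_const; apply: ler_sum => z _.
by rewrite rowpowE powR_le1 ?rowmass_le1 ?rowmass_ge0 // ltW.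
Qed.

Lemma masssum_eq2 : p = 2 -> masssum = N.
Proof. by move=> p2; apply/le_anti; rewrite masssum_le ?masssum_ge ?p2. Qed.

Lemma clifford_masssumP : p != 2 -> clifford U <-> masssum = N.
Proof.
move=> p2; rewrite (clifford_rowmassP hU p_gt0 p2) sumr_eq_card; last first.
  case: (ltgtP p 2) p2 => // hp _; [left|right] => z.
    by rewrite rowpowE powR_ge1 ?rowmass_ge1 ?(ltW hp) // ltW.
  by rewrite rowpowE powR_le1 ?rowmass_le1 ?(ltW hp) ?rowmass_ge0 // ltW.
by split=> h z; move: (h z); rewrite rowpowE powR_eq1P // ltW ?rowmass_gt0.
Qed.

End MassSum.

Section TensorNorms.
Variables (R : realType) (n1 n2 : nat) (U1 : op R n1) (U2 : op R n2).
Hypotheses (hU1 : unitary U1) (hU2 : unitary U2).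
Hypotheses (hn1 : (1 <= n1)%N) (hn2 : (1 <= n2)%N).
Variable p : R.
Hypothesis p_gt0 : 0 < p.

Local Notation K := (kron (hatM U1) (hatM U2)).
Local Notation T := (hatM (tensor U1 U2)).

Lemma rowmass_tensor z1 z2 :
  rowmass (tensor U1 U2) p (joinf z1 z2) = rowmass U1 p z1 * rowmass U2 p z2.
Proof.
rewrite /rowmass sum_join big_distrlr /=; apply: eq_bigr => x1 _.
by apply: eq_bigr => x2 _; rewrite ptm_tensor Normc.normcM powRM ?modc_ge0.
Qed.

Lemma rownorm_tensor (z : nzpstr (n1 + n2)) :
  rownorm p (T z) =
  rowmass U1 p (lpf (val z)) `^ p^-1 * rowmass U2 p (rpf (val z)) `^ p^-1.
Proof.
rewrite (rownorm_hatM (unitary_tensor hU1 hU2)) // -powRM ?rowmass_ge0 //.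
by rewrite -rowmass_tensor join_lr.
Qed.

Section FiniteQ.
Variable q : R.
Hypothesis q_gt0 : 0 < q.

Local Notation N1 := (#|{: nzpstr n1}|%:R : R).
Local Notation N2 := (#|{: nzpstr n2}|%:R : R).
Local Notation S1 := (masssum U1 p q).
Local Notation S2 := (masssum U2 p q).

Lemma card_nzpstr_tensor :
  (#|{: nzpstr (n1 + n2)}|%:R : R) = (N1 + 1) * (N2 + 1) - 1.
Proof.
have := card_nzpstr (n1 + n2); rewrite expnD -(card_nzpstr n1) -(card_nzpstr n2).
by move/(congr1 (fun k => k%:R : R)); rewrite natrD natrM !natrD => h; lra.
Qed.

(* The two group norms are the q-th roots of the two averages: rows of K are
   indexed by pairs of nonzero strings, rows of T by all nonzero joint
   strings, including those with one zero part. *)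
Lemma group_norm_kron : group_norm p q K = prod_avg N1 N2 S1 S2 `^ q^-1.
Proof.
rewrite /group_norm /prod_avg card_prod natrM big_distrlr pair_bigA /=.
congr ((_ * _) `^ _); apply: eq_bigr => z _.
by rewrite rownorm_kron (rownorm_hatM hU1) // (rownorm_hatM hU2) // powRM ?powR_ge0.
Qed.

Lemma group_norm_tensor : group_norm p q T = tensor_avg N1 N2 S1 S2 `^ q^-1.
Proof.
rewrite /group_norm /tensor_avg card_nzpstr_tensor; congr ((_ * _) `^ _).
have rowpow_tensor z1 z2 :
    rowpow (tensor U1 U2) p q (joinf z1 z2) = rowpow U1 p q z1 * rowpow U2 p q z2.
  by rewrite /rowpow rowmass_tensor powRM ?rowmass_ge0 // powRM ?powR_ge0.
have all_rows : \sum_(z : pstr (n1 + n2)) rowpow (tensor U1 U2) p q z = (1 + S1) * (1 + S2).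
  rewrite sum_join; under eq_bigr do under eq_bigr do rewrite rowpow_tensor.
  by rewrite -big_distrlr /= !sum_pstr0 !rowpow0.
move: all_rows; rewrite sum_pstr0 (rowpow0 (unitary_tensor hU1 hU2)) // => <-.
rewrite addrC addrK.
by apply: eq_bigr => z _; rewrite (rownorm_hatM (unitary_tensor hU1 hU2)).
Qed.

Let N1_gt0 : 0 < N1 := card_nzpstr_gt0 R hn1.
Let N2_gt0 : 0 < N2 := card_nzpstr_gt0 R hn2.
Let S1_ge0 : 0 <= S1 := masssum_ge0 U1 p q.
Let S2_ge0 : 0 <= S2 := masssum_ge0 U2 p q.

Let root_le x y : 0 <= x -> 0 <= y -> x <= y -> x `^ q^-1 <= y `^ q^-1.
Proof. by move=> x0 y0; apply: ge0_ler_powR; rewrite ?nnegrE // invr_ge0 ltW. Qed.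

Let root_inj x y : 0 <= x -> 0 <= y -> x `^ q^-1 = y `^ q^-1 -> x = y.
Proof. by move=> x0 y0; apply: (powR_injective (r := q^-1)); rewrite ?invr_gt0. Qed.

(* Part (1), inequality: for p < 2 all row masses are >= 1. *)
Lemma group_norm_tensor_le : p < 2 -> group_norm p q T <= group_norm p q K.
Proof.
move=> hp; rewrite group_norm_kron group_norm_tensor.
by rewrite root_le ?tensor_avg_ge0 ?prod_avg_ge0 ?tensor_le_prod_avg
  ?masssum_ge // ltW.
Qed.

(* Part (3), inequality: for p > 2 all row masses are <= 1. *)
Lemma group_norm_kron_le : 2 < p -> group_norm p q K <= group_norm p q T.
Proof.
move=> hp; rewrite group_norm_kron group_norm_tensor.
by rewrite root_le ?tensor_avg_ge0 ?prod_avg_ge0 ?prod_le_tensor_avg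
  ?S1_ge0 ?S2_ge0 ?masssum_le // ltW.
Qed.

Lemma group_norm_eqP : p != 2 ->
  group_norm p q K = group_norm p q T <-> clifford U1 /\ clifford U2.
Proof.
move=> p2; rewrite group_norm_kron group_norm_tensor.
rewrite (clifford_masssumP hU1 p_gt0 q_gt0 p2) (clifford_masssumP hU2 p_gt0 q_gt0 p2).
rewrite -avg_eqP //; last first.
  case: (ltgtP p 2) p2 => // hp _; [left|right].
    by rewrite !masssum_ge // ltW.
  by rewrite !masssum_gt0 ?masssum_le // ltW.
split=> [|-> //]; apply: root_inj; by rewrite ?tensor_avg_ge0 ?prod_avg_ge0.
Qed.

(* Part (4) for finite q: at p = 2 every row mass is 1. *)
Lemma group_norm_p2 : p = 2 -> group_norm p q K = 1 /\ group_norm p q T = 1.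
Proof.
move=> p2; rewrite group_norm_kron group_norm_tensor !masssum_eq2 //.
by rewrite prod_avg_full ?tensor_avg_full // powR1.
Qed.

End FiniteQ.

Lemma group_norm_inf_kron :
  group_norm_inf p K = group_norm_inf p (hatM U1) * group_norm_inf p (hatM U2).
Proof.
rewrite /group_norm_inf -(bigmax_mul (nzpstr_witness hn1) (nzpstr_witness hn2));
  try by move=> ?; apply: rownorm_ge0.
by apply: eq_bigr => z _; rewrite rownorm_kron.
Qed.

(* Parts (2)/(3), first inequality: a maximal row of K reappears in T as the
   row of the joint string (z1, z2), which is nonzero. *)
Lemma group_norm_inf_kron_le : group_norm_inf p K <= group_norm_inf p T.
Proof.
rewrite group_norm_inf_kron /group_norm_inf.
have [z1 ->] := bigmax_attained (nzpstr_witness hn1) (fun z => rownorm_ge0 p (hatM U1 z)).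
have [z2 ->] := bigmax_attained (nzpstr_witness hn2) (fun z => rownorm_ge0 p (hatM U2 z)).
pose z : nzpstr (n1 + n2) :=
  exist (fun z => z != pstr0 (n1 + n2)) _ (joinf_neq0 (val z2) (valP z1)).
have -> : rownorm p (hatM U1 z1) * rownorm p (hatM U2 z2) = rownorm p (T z).
  by rewrite (rownorm_hatM hU1) // (rownorm_hatM hU2) // rownorm_tensor /= lpf_join rpf_join.
exact: (le_bigmax 0 (fun z => rownorm p (T z)) z).
Qed.

(* Part (2), second inequality: for p <= 2 each factor of a row norm of T is
   bounded by the largest row norm of the corresponding factor. *)
Lemma group_norm_inf_tensor_le : p <= 2 -> group_norm_inf p T <= group_norm_inf p K.
Proof.
move=> hp; rewrite group_norm_inf_kron; apply: bigmax_le => [|z _].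
  by rewrite mulr_ge0 // bigmax_ge_id.
rewrite rownorm_tensor; apply: ler_pM; rewrite ?powR_ge0 //.
  exact: (rowmass_root_le_inf hU1 p_gt0 hn1).
exact: (rowmass_root_le_inf hU2 p_gt0 hn2).
Qed.

End TensorNorms.

Theorem mainTheorem16 (R : realType) (n1 n2 : nat) (U1 : op R n1) (U2 : op R n2) :
  (1 <= n1)%N -> (1 <= n2)%N -> unitary U1 -> unitary U2 ->
  let K := kron (hatM U1) (hatM U2) in
  let T := hatM (tensor U1 U2) in
  (* (1) *)
  (forall p q : R, 0 < p -> p < 2 -> 0 < q ->
     group_norm p q T <= group_norm p q K /\
     (group_norm p q K = group_norm p q T <-> clifford U1 /\ clifford U2)) /\
  (* (2) *)
  (forall p : R, 0 < p -> p < 2 -> group_norm_inf p K = group_norm_inf p T) /\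
  (* (3) *)
  (forall p : R, 2 < p ->
     (forall q : R, 0 < q ->
        group_norm p q K <= group_norm p q T /\
        (group_norm p q K = group_norm p q T <-> clifford U1 /\ clifford U2)) /\
     group_norm_inf p K <= group_norm_inf p T) /\
  (* (4) *)
  ((forall q : R, 0 < q -> group_norm 2 q K = group_norm 2 q T /\ group_norm 2 q T = 1) /\
   group_norm_inf 2 K = group_norm_inf 2 T /\ group_norm_inf 2 T = 1).
Proof.
move=> hn1 hn2 hU1 hU2 K T; have two_gt0 : (0 : R) < 2 by [].
have hn12 : (1 <= n1 + n2)%N by rewrite (leq_trans hn1) ?leq_addr.
split; [|split; [|split]].
- move=> p q p_gt0 hp q_gt0; split; first exact: group_norm_tensor_le.
  exact: group_norm_eqP (negbT (lt_eqF hp)).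
- move=> p p_gt0 hp; apply/le_anti.
  by rewrite group_norm_inf_kron_le ?group_norm_inf_tensor_le ?ltW.
- move=> p hp; have p_gt0 : 0 < p := lt_trans two_gt0 hp.
  split; last exact: group_norm_inf_kron_le.
  move=> q q_gt0; split; first exact: group_norm_kron_le.
  exact: group_norm_eqP (negbT (gt_eqF hp)).
- split=> [q q_gt0|].
    by have [-> ->] := group_norm_p2 hU1 hU2 hn1 hn2 two_gt0 q_gt0 erefl.
  rewrite group_norm_inf_kron //.
  rewrite (group_norm_inf_p2 hU1 two_gt0 hn1 erefl).
  rewrite (group_norm_inf_p2 hU2 two_gt0 hn2 erefl).
  by rewrite (group_norm_inf_p2 (unitary_tensor hU1 hU2) two_gt0 hn12 erefl) mulr1.
Qed.
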